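(* Let $T>0$, $\underline{\Phi}\in\mathbb{R}$, and let $\mu\in C([0,T],(0,\infty))$ satisfy $\Phi_h(\mu)\neq0$. Consider: (a) $\Phi(z_\mu(T))=\underline{\Phi}$ and there exists $\lambda\in\mathbb{R}$ such that for every $\delta\mu\in C([0,T],\mathbb{R})$, $\frac{\mathrm{d}}{\mathrm{d}\varepsilon}\big|_{\varepsilon=0}\big[\mathcal{G}(\mu+\varepsilon\delta\mu)+\lambda\,\Phi(z_{\mu+\varepsilon\delta\mu}(T))\big]=0$ (first-order necessary conditions for a stationary point of $\mathcal{G}$ subject to $\Phi(z_\mu(T))=\underline{\Phi}$); (b) for a given $C_2>0$: $\mathcal{I}(\mu)=C_2$ and there exists $\lambda_{\mathrm{ref}}\in\mathbb{R}$ such that for every $\delta\mu\in C([0,T],\mathbb{R})$, $\frac{\mathrm{d}}{\mathrm{d}\varepsilon}\big|_{\varepsilon=0}\big[\mathcal{G}(\mu+\varepsilon\delta\mu)+\lambda_{\mathrm{ref}}\,\mathcal{I}(\mu+\varepsilon\delta\mu)\big]=0$ (first-order necessary conditions for a stationary point of $\mathcal{G}$ subject to $\mathcal{I}(\mu)=C_2$). Then: if (a) holds, then (b) holds with $C_2:=\mathcal{I}(\mu)$, which satisfies $\Phi(\hat z(C_2))=\underline{\Phi}$, and with $\lambda_{\mathrm{ref}}=\lambda\,\Phi_h(\mu)$. Conversely, if (b) holds for some $C_2>0$ satisfying $\Phi(\hat z(C_2))=\underline{\Phi}$, then (a) holds with $\lambda=\lambda_{\mathrm{ref}}/\Phi_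h(\mu)$.
   Context: Standing setup: $n,s\ge1$, $p\in\mathbb{R}^s$, $z_0\in\mathbb{R}^n$; $h:\mathbb{R}^n\times\mathbb{R}^s\to\mathbb{R}^n$ is continuously differentiable in its first argument and such that the autonomous initial value problem $\hat z'(\tau)=h(\hat z(\tau),p)$, $\hat z(0)=z_0$ has a unique solution $\hat z$ defined for all $\tau\in\mathbb{R}$. For $T>0$ and $\mu\in C([0,T],\mathbb{R})$, $z_\mu:[0,T]\to\mathbb{R}^n$ denotes the solution of $\dot z(t)=\mu(t)h(z(t),p)$, $z(0)=z_0$. $\Phi:\mathbb{R}^n\to\mathbb{R}$ is continuously differentiable, and $g:\mathbb{R}\to\mathbb{R}$ is continuously differentiable and positive. Define $\mathcal{G}(\mu):=\int_0^T g(\mu(t))\,\mathrm{d}t$, $\mathcal{I}(\mu):=\int_0^T\mu(t)\,\mathrm{d}t$, and $\Phi_h(\mu):=\nabla\Phi(z_\mu(T))\cdot h(z_\mu(T),p)$ (the Lie derivative of $\Phi$ along $h$ at the terminal state). *)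

From Stdlib Require Import Reals Lra ClassicalEpsilon FunctionalExtensionality.
From Stdlib Require Fin.
Open Scope R_scope.

Definition vec (n : nat) : Type := Fin.t n -> R.

Fixpoint fsum (n : nat) : (Fin.t n -> R) -> R :=
  match n with
  | O => fun _ => 0
  | S m => fun f => f Fin.F1 + fsum m (fun i => f (Fin.FS i))
  end.

Definition dot {n : nat} (x y : vec n) : R := fsum n (fun i => x i * y i).

Definition vupd {n : nat} (x : vec n) (i : Fin.t n) (t : R) : vec n :=
  fun j => if Fin.eq_dec i j then x j + t else x j.

Definition cont_on (a b : R) (f : R -> R) : Prop :=
  forall t, a <= t <= b -> forall eps, eps > 0 ->
    exists delta, delta > 0 /\
      forall t', a <= t' <= b -> Rabs (t' - t) < delta -> Rabs (f t' - f t) < eps.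

Definition cont_vec {n : nat} (F : vec n -> R) : Prop :=
  forall x eps, eps > 0 -> exists delta, delta > 0 /\
    forall y : vec n, (forall i, Rabs (y i - x i) < delta) -> Rabs (F y - F x) < eps.

Definition C1_vec {n : nat} (f : vec n -> R) : Prop :=
  exists D : Fin.t n -> vec n -> R,
    (forall i x, derivable_pt_lim (fun t => f (vupd x i t)) 0 (D i x)) /\
    (forall i, cont_vec (D i)).

Definition C1_real (g : R -> R) : Prop :=
  exists g' : R -> R, (forall x, derivable_pt_lim g x (g' x)) /\ continuity g'.

Definition partial {n : nat} (f : vec n -> R) (i : Fin.t n) (x : vec n) : R :=
  epsilon (inhabits 0) (fun l => derivable_pt_lim (fun t => f (vupd x i t)) 0 l).

Definition grad {n : nat} (f : vec n -> R) (x : vec n) : vec n := fun i => partial f i x.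

Definition RInt (f : R -> R) (a b : R) : R :=
  epsilon (inhabits 0) (fun l => exists pr : Riemann_integrable f a b, RiemannInt pr = l).

Definition Gfun (g : R -> R) (T : R) (mu : R -> R) : R := RInt (fun t => g (mu t)) 0 T.
Definition Ifun (T : R) (mu : R -> R) : R := RInt mu 0 T.

Definition is_sol {n s : nat} (h : vec n -> vec s -> vec n) (p : vec s) (z0 : vec n)
    (T : R) (mu : R -> R) (z : R -> vec n) : Prop :=
  (forall j, cont_on 0 T (fun t => z t j)) /\
  z 0 = z0 /\
  (forall t, 0 < t < T -> forall j,
      derivable_pt_lim (fun u => z u j) t (mu t * h (z t) p j)).

Definition is_global_sol {n s : nat} (h : vec n -> vec s -> vec n) (p : vec s) (z0 : vec n)
    (zh : R -> vec n) : Prop :=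
  zh 0 = z0 /\
  (forall tau j, derivable_pt_lim (fun u => zh u j) tau (h (zh tau) p j)).

Definition Phih {n s : nat} (Phi : vec n -> R) (h : vec n -> vec s -> vec n) (p : vec s)
    (zsol : (R -> R) -> R -> vec n) (T : R) (mu : R -> R) : R :=
  dot (grad Phi (zsol mu T)) (h (zsol mu T) p).

Definition stationary_a {n : nat} (g : R -> R) (Phi : vec n -> R)
    (zsol : (R -> R) -> R -> vec n) (T : R) (mu : R -> R) (lam : R) : Prop :=
  forall dmu : R -> R, cont_on 0 T dmu ->
    derivable_pt_lim
      (fun eps => Gfun g T (fun t => mu t + eps * dmu t)
                  + lam * Phi (zsol (fun t => mu t + eps * dmu t) T)) 0 0.

Definition stationary_b (g : R -> R) (T : R) (mu : R -> R) (lamref : R) : Prop :=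
  forall dmu : R -> R, cont_on 0 T dmu ->
    derivable_pt_lim
      (fun eps => Gfun g T (fun t => mu t + eps * dmu t)
                  + lamref * Ifun T (fun t => mu t + eps * dmu t)) 0 0.

(* Because the right-hand side of [z' = mu(t) h(z, p)] is the autonomous field
   scaled by [mu], the curve [t |-> zhat (\int_0^t mu)] solves it; by uniqueness
   (a local contraction argument, the field being locally Lipschitz as it is C^1)
   it is [z_mu], so [z_mu(T) = zhat (I mu)].  Hence the constraint
   [Phi (z_mu T) = Phibar] reads [Phi (zhat (I mu)) = Phibar], and by the chain rule
   the derivative of [mu |-> Phi (z_mu T)] in a direction [dmu] is
   [Phi_h(mu) * I(dmu)], proportional to that of [I].  The two Lagrange conditions
   therefore transfer into each other with the multiplier rescaled by [Phi_h(mu)]. *)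

From Pilot Require Import Defs.
From Stdlib Require Import Reals Lra ClassicalEpsilon FunctionalExtensionality List.
From Coquelicot Require Import Coquelicot.
Open Scope R_scope.

(* Extending [f] by [fun t => f (clamp a b t)] turns continuity relative to
   [[a, b]] into continuity on all of [R], where Coquelicot's theory applies. *)
Definition clamp (a b t : R) : R := Rmin b (Rmax a t).

Lemma clamp_between a b t : a <= b -> a <= clamp a b t <= b.
Proof. intros; unfold clamp, Rmin, Rmax; repeat destruct Rle_dec; lra. Qed.

Lemma clamp_id a b t : a <= t <= b -> clamp a b t = t.
Proof. intros; unfold clamp, Rmin, Rmax; repeat destruct Rle_dec; lra. Qed.

Lemma clamp_dist_le a b t t' :
  a <= b -> Rabs (clamp a b t' - clamp a b t) <= Rabs (t' - t).
Proof.
  intros; unfold clamp, Rmin, Rmax; repeat destruct Rle_dec;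
  unfold Rabs; repeat destruct Rcase_abs; lra.
Qed.

Lemma continuity_pt_clamp a b f :
  a <= b -> cont_on a b f -> forall x, continuity_pt (fun t => f (clamp a b t)) x.
Proof.
  intros Hab Hf x eps Heps.
  destruct (Hf (clamp a b x) (clamp_between a b x Hab) eps Heps) as [d [Hd H]].
  exists d; split; [exact Hd|]. intros y [_ Hy]. apply H.
  - apply clamp_between, Hab.
  - eapply Rle_lt_trans; [apply clamp_dist_le, Hab | exact Hy].
Qed.

Lemma continuous_clamp a b f :
  a <= b -> cont_on a b f -> forall x, continuous (fun t => f (clamp a b t)) x.
Proof. intros; apply continuity_pt_filterlim, continuity_pt_clamp; assumption. Qed.

Lemma RInt_ext_clamp a b :
  a <= b -> forall g : R -> R, RInt g a b = RInt (fun t => g (clamp a b t)) a b.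
Proof.
  intros Hab g. apply RInt_ext. intros x Hx.
  rewrite Rmin_left, Rmax_right in Hx by exact Hab. rewrite clamp_id; lra.
Qed.

Lemma ex_RInt_cont_on a b f : a <= b -> cont_on a b f -> ex_RInt f a b.
Proof.
  intros Hab Hf.
  apply ex_RInt_ext with (f := fun t => f (clamp a b t)).
  - intros x Hx. rewrite Rmin_left, Rmax_right in Hx by exact Hab.
    rewrite clamp_id; lra.
  - apply (ex_RInt_continuous (V := R_CompleteNormedModule)).
    intros; apply continuous_clamp; assumption.
Qed.

Lemma RInt_Riemann f a b : ex_RInt f a b -> Defs.RInt f a b = RInt f a b.
Proof.
  intros H. pose proof (ex_RInt_Reals_0 _ _ _ H) as pr.
  unfold Defs.RInt.
  destruct (epsilon_spec (inhabits 0)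
              (fun l => exists pr : Riemann_integrable f a b, RiemannInt pr = l))
    as [pr' <-].
  - exists (RiemannInt pr), pr; reflexivity.
  - symmetry; apply RInt_Reals.
Qed.

Lemma cont_on_plus_scal a b f g c :
  cont_on a b f -> cont_on a b g -> cont_on a b (fun t => f t + c * g t).
Proof.
  intros Hf Hg t Ht eps Heps.
  set (k := Rabs c + 1).
  assert (Hk : 0 < k) by (pose proof (Rabs_pos c); unfold k; lra).
  destruct (Hf t Ht (eps / 2)) as [d1 [Hd1 H1]]; [lra|].
  destruct (Hg t Ht (eps / 2 / k)) as [d2 [Hd2 H2]].
  { apply Rdiv_lt_0_compat; lra. }
  exists (Rmin d1 d2); split; [apply Rmin_glb_lt; assumption|].
  intros t' Ht' Hd.
  specialize (H1 t' Ht' (Rlt_le_trans _ _ _ Hd (Rmin_l _ _))).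
  specialize (H2 t' Ht' (Rlt_le_trans _ _ _ Hd (Rmin_r _ _))).
  replace (f t' + c * g t' - (f t + c * g t)) with ((f t' - f t) + c * (g t' - g t))
    by ring.
  eapply Rle_lt_trans; [apply Rabs_triang|]. rewrite Rabs_mult.
  assert (Rabs c * Rabs (g t' - g t) <= k * (eps / 2 / k)).
  { apply Rmult_le_compat; try apply Rabs_pos; [unfold k; lra | lra]. }
  replace (k * (eps / 2 / k)) with (eps / 2) in * by (field; lra). lra.
Qed.

Lemma Ifun_plus_scal T mu dmu e :
  0 <= T -> cont_on 0 T mu -> cont_on 0 T dmu ->
  Ifun T (fun t => mu t + e * dmu t) = Ifun T mu + e * Ifun T dmu.
Proof.
  intros HT Hm Hd. unfold Ifun.
  rewrite !RInt_Riemann by (apply ex_RInt_cont_on; auto using cont_on_plus_scal).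
  apply is_RInt_unique, (is_RInt_plus (V := R_NormedModule)).
  - apply (RInt_correct (V := R_CompleteNormedModule)), ex_RInt_cont_on; assumption.
  - apply (is_RInt_scal (V := R_NormedModule)).
    apply (RInt_correct (V := R_CompleteNormedModule)), ex_RInt_cont_on; assumption.
Qed.

Lemma Ifun_gt0 T mu :
  0 < T -> cont_on 0 T mu -> (forall t, 0 <= t <= T -> 0 < mu t) -> Ifun T mu > 0.
Proof.
  intros HT Hm Hp. unfold Ifun.
  rewrite RInt_Riemann by (apply ex_RInt_cont_on; auto; lra).
  rewrite (RInt_ext_clamp 0 T) by lra.
  apply RInt_gt_0; [exact HT| |].
  - intros x _; apply Hp, clamp_between; lra.
  - intros; apply continuous_clamp; auto; lra.
Qed.

Lemma derivable_pt_lim_clamp T f x l :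
  0 < x < T -> derivable_pt_lim f x l -> derivable_pt_lim (fun t => f (clamp 0 T t)) x l.
Proof.
  intros Hx H. apply is_derive_Reals. apply is_derive_Reals in H.
  eapply is_derive_ext_loc; [|exact H].
  assert (Hp : 0 < Rmin x (T - x)) by (apply Rmin_glb_lt; lra).
  exists (mkposreal _ Hp). intros y Hy. change (Rabs (y - x) < Rmin x (T - x)) in Hy.
  pose proof (Rmin_l x (T - x)). pose proof (Rmin_r x (T - x)).
  apply Rabs_def2 in Hy. rewrite clamp_id; lra.
Qed.

Lemma fsum_ext n (f g : Fin.t n -> R) : (forall i, f i = g i) -> fsum n f = fsum n g.
Proof. intros; f_equal; apply functional_extensionality; assumption. Qed.

Lemma fsum_plus n (f g : Fin.t n -> R) : fsum n (fun i => f i + g i) = fsum n f + fsum n g.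
Proof. revert f g; induction n; intros; simpl; [ring|]. rewrite IHn; ring. Qed.

Lemma fsum_scal n (f : Fin.t n -> R) c : fsum n (fun i => c * f i) = c * fsum n f.
Proof. revert f; induction n; intros; simpl; [ring|]. rewrite IHn; ring. Qed.

Lemma fsum_le n (f g : Fin.t n -> R) : (forall i, f i <= g i) -> fsum n f <= fsum n g.
Proof.
  revert f g; induction n; intros f g H; simpl; [lra|].
  pose proof (H Fin.F1). pose proof (IHn _ _ (fun i => H (Fin.FS i))). lra.
Qed.

Lemma fsum_abs n (f : Fin.t n -> R) : Rabs (fsum n f) <= fsum n (fun i => Rabs (f i)).
Proof.
  revert f; induction n; intros; simpl; [rewrite Rabs_R0; lra|].
  eapply Rle_trans; [apply Rabs_triang|].
  pose proof (IHn (fun i => f (Fin.FS i))). lra.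
Qed.

Lemma fsum_ge0 n (f : Fin.t n -> R) : (forall j, 0 <= f j) -> 0 <= fsum n f.
Proof.
  revert f; induction n; intros f H; simpl; [lra|].
  pose proof (H Fin.F1). pose proof (IHn _ (fun j => H (Fin.FS j))). lra.
Qed.

Lemma fsum_ge_term n (f : Fin.t n -> R) i : (forall j, 0 <= f j) -> f i <= fsum n f.
Proof.
  revert f i; induction n; intros f i H; [exact (Fin.case0 (fun i => f i <= fsum 0 f) i)|].
  simpl. apply (Fin.caseS' i).
  - pose proof (fsum_ge0 n (fun j => f (Fin.FS j)) (fun j => H _)). lra.
  - intros j. pose proof (IHn (fun j => f (Fin.FS j)) j (fun j => H _)).
    pose proof (H Fin.F1). lra.
Qed.

Lemma fin_common_radius n (Q : Fin.t n -> R -> Prop) :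
  (forall i d d', 0 < d' <= d -> Q i d -> Q i d') ->
  (forall i, exists d, d > 0 /\ Q i d) -> exists d, d > 0 /\ forall i, Q i d.
Proof.
  induction n; intros Hm Hex.
  - exists 1; split; [lra|]. apply Fin.case0.
  - destruct (IHn (fun i d => Q (Fin.FS i) d)) as [d1 [Hd1 H1]].
    + intros; eapply Hm; eauto.
    + intros; apply Hex.
    + destruct (Hex Fin.F1) as [d0 [Hd0 H0]].
      exists (Rmin d0 d1); split; [apply Rmin_glb_lt; assumption|].
      intros i; apply (Fin.caseS' i).
      * eapply Hm; [|exact H0]. split; [apply Rmin_glb_lt; assumption | apply Rmin_l].
      * intros j; eapply Hm; [|apply H1].
        split; [apply Rmin_glb_lt; assumption | apply Rmin_r].
Qed.

Lemma fin_common_bound n (P : Fin.t n -> R -> Prop) :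
  (forall i B B', B <= B' -> P i B -> P i B') ->
  (forall i, exists B, P i B) -> exists B, forall i, P i B.
Proof.
  induction n; intros Hm Hex.
  - exists 0. apply Fin.case0.
  - destruct (IHn (fun i d => P (Fin.FS i) d)) as [B1 H1].
    + intros; eapply Hm; eauto.
    + intros; apply Hex.
    + destruct (Hex Fin.F1) as [B0 H0].
      exists (Rmax B0 B1). intros i; apply (Fin.caseS' i).
      * eapply Hm; [apply Rmax_l | exact H0].
      * intros j; eapply Hm; [apply Rmax_r | apply H1].
Qed.

Fixpoint fin_enum (n : nat) : list (Fin.t n) :=
  match n with O => nil | S m => Fin.F1 :: map Fin.FS (fin_enum m) end.

Lemma in_fin_enum n (i : Fin.t n) : In i (fin_enum n).
Proof.
  induction n; [exact (Fin.case0 _ i)|].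
  apply (Fin.caseS' i); simpl; auto using in_map.
Qed.

Lemma NoDup_fin_enum n : NoDup (fin_enum n).
Proof.
  induction n; simpl; constructor.
  - intros H; apply in_map_iff in H; destruct H as [x [H _]]; discriminate.
  - apply NoDup_map_NoDup_ForallPairs; [|assumption].
    intros x y _ _; apply Fin.FS_inj.
Qed.

Lemma length_fin_enum n : length (fin_enum n) = n.
Proof. induction n; simpl; [reflexivity|]. rewrite length_map; auto. Qed.

Definition lsum {n} (l : list (Fin.t n)) (f : Fin.t n -> R) : R :=
  fold_right (fun a acc => f a + acc) 0 l.

Lemma lsum_map_FS {n} (l : list (Fin.t n)) f :
  lsum (map Fin.FS l) f = lsum l (fun i => f (Fin.FS i)).
Proof. induction l; simpl; [reflexivity|]. unfold lsum in *; simpl; rewrite IHl; reflexivity. Qed.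

Lemma lsum_fin_enum n f : lsum (fin_enum n) f = fsum n f.
Proof.
  induction n; simpl; [reflexivity|].
  unfold lsum at 1; simpl. fold (lsum (map Fin.FS (fin_enum n)) f).
  rewrite lsum_map_FS, IHn; reflexivity.
Qed.

Lemma lsum_zero {n} (l : list (Fin.t n)) : lsum l (fun _ => 0) = 0.
Proof. induction l; unfold lsum in *; simpl; [reflexivity|]. rewrite IHl; ring. Qed.

(** * Functions with continuous partial derivatives *)

Definition C1_partials {n} (f : vec n -> R) (D : Fin.t n -> vec n -> R) : Prop :=
  (forall i x, derivable_pt_lim (fun t => f (vupd x i t)) 0 (D i x)) /\
  (forall i, cont_vec (D i)).

Lemma partial_C1 {n} (f : vec n -> R) D i x :
  C1_partials f D -> partial f i x = D i x.
Proof.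
  intros [HD _]. unfold partial.
  apply (uniqueness_limite (fun t => f (vupd x i t)) 0); [|apply HD].
  apply (epsilon_spec (inhabits 0)
           (fun l => derivable_pt_lim (fun t => f (vupd x i t)) 0 l)).
  exists (D i x); apply HD.
Qed.

Lemma vupd_vupd {n} (x : vec n) i a b : vupd (vupd x i a) i b = vupd x i (a + b).
Proof. apply functional_extensionality; intros j; unfold vupd; destruct Fin.eq_dec; ring. Qed.

Lemma vupd_0 {n} (x : vec n) i : vupd x i 0 = x.
Proof. apply functional_extensionality; intros j; unfold vupd; destruct Fin.eq_dec; ring. Qed.

Lemma derivable_pt_lim_vupd {n} (f : vec n -> R) D x i t0 :
  (forall i x, derivable_pt_lim (fun t => f (vupd x i t)) 0 (D i x)) ->
  derivable_pt_lim (fun t => f (vupd x i t)) t0 (D i (vupd x i t0)).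
Proof.
  intros HD eps Heps. destruct (HD i (vupd x i t0) eps Heps) as [d Hd].
  exists d. intros k Hk Hk'. specialize (Hd k Hk Hk').
  rewrite !vupd_vupd, Rplus_0_l, Rplus_0_r in Hd. exact Hd.
Qed.

Definition box {n} (x0 : vec n) r (y : vec n) := forall i, Rabs (y i - x0 i) < r.

(* Adding the coordinates of [l] one at a time walks from [y] to [y'] along
   coordinate edges. *)
Definition mix {n} (l : list (Fin.t n)) (y y' : vec n) : vec n :=
  fun i => if in_dec Fin.eq_dec i l then y' i else y i.

Lemma mix_nil {n} (y y' : vec n) : mix nil y y' = y.
Proof. reflexivity. Qed.

Lemma mix_cons {n} a l (y y' : vec n) :
  ~ In a l -> mix (a :: l) y y' = vupd (mix l y y') a (y' a - y a).
Proof.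
  intros Ha. apply functional_extensionality; intros j; unfold mix, vupd.
  destruct (Fin.eq_dec a j) as [<-|Hne].
  - destruct (in_dec Fin.eq_dec a (a :: l)) as [_|C]; [|simpl in C; tauto].
    destruct (in_dec Fin.eq_dec a l); [tauto|]. ring.
  - destruct (in_dec Fin.eq_dec j (a :: l)) as [Hj|Hj];
    destruct (in_dec Fin.eq_dec j l) as [Hj'|Hj']; auto.
    + simpl in Hj; destruct Hj; [congruence|tauto].
    + exfalso; apply Hj; simpl; auto.
Qed.

Lemma mix_fin_enum {n} (y y' : vec n) : mix (fin_enum n) y y' = y'.
Proof.
  apply functional_extensionality; intros j; unfold mix.
  destruct in_dec as [_|C]; [reflexivity|]. exfalso; apply C, in_fin_enum.
Qed.

Section IncrementEstimate.

Variables (n : nat) (f : vec n -> R) (D : Fin.t n -> vec n -> R).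
Hypothesis HD : forall i x, derivable_pt_lim (fun t => f (vupd x i t)) 0 (D i x).

(* Mean value theorem on each edge of the coordinate path. *)
Lemma mix_increment_estimate x0 r L eps y y' rho :
  (forall xi i, box x0 r xi -> Rabs (D i xi - L i) <= eps) ->
  box x0 r y -> box x0 r y' -> (forall i, Rabs (y' i - y i) <= rho) ->
  forall l, NoDup l ->
  Rabs (f (mix l y y') - f y - lsum l (fun i => L i * (y' i - y i)))
    <= INR (length l) * eps * rho.
Proof.
  intros HL Hy Hy' Hr. induction l as [|a l IH]; intros Hnd.
  - rewrite mix_nil. simpl. unfold lsum; simpl.
    rewrite Rminus_diag, Rminus_0_r, Rabs_R0. lra.
  - inversion Hnd as [|? ? Ha Hnd']; subst. specialize (IH Hnd').
    rewrite mix_cons by exact Ha. set (m := mix l y y') in *. set (Dl := y' a - y a).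
    destruct (MVT_gen (fun t => f (vupd m a t)) 0 Dl (fun t => D a (vupd m a t)))
      as [c [Hc Hmvt]].
    + intros x _. apply is_derive_Reals, derivable_pt_lim_vupd, HD.
    + intros x _. apply derivable_continuous_pt.
      exists (D a (vupd m a x)). apply derivable_pt_lim_vupd, HD.
    + simpl in Hmvt. rewrite vupd_0 in Hmvt.
      assert (Hbox : box x0 r (vupd m a c)).
      { intros j. unfold vupd. destruct (Fin.eq_dec a j) as [<-|Hne].
        - assert (Hma : m a = y a) by (unfold m, mix; destruct in_dec; tauto).
          rewrite Hma. specialize (Hy a); specialize (Hy' a). unfold Dl in Hc.
          revert Hc Hy Hy'. unfold Rmin, Rmax, Rabs.
          repeat destruct Rle_dec; repeat destruct Rcase_abs; intros; lra.
        - unfold m, mix. destruct in_dec; [apply Hy' | apply Hy]. }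
      assert (Hedge : Rabs (D a (vupd m a c) * Dl - L a * Dl) <= eps * rho).
      { replace (D a (vupd m a c) * Dl - L a * Dl) with ((D a (vupd m a c) - L a) * Dl)
          by ring.
        rewrite Rabs_mult. apply Rmult_le_compat; try apply Rabs_pos; [apply HL, Hbox | apply Hr]. }
      change (length (a :: l)) with (S (length l)). rewrite S_INR.
      unfold lsum in *; simpl. fold (lsum l (fun i => L i * (y' i - y i))) in *.
      replace (f (vupd m a Dl) - f y
                 - (L a * (y' a - y a) + lsum l (fun i => L i * (y' i - y i))))
        with ((f m - f y - lsum l (fun i => L i * (y' i - y i)))
              + (D a (vupd m a c) * Dl - L a * Dl))
        by (unfold Dl in *; lra).
      eapply Rle_trans; [apply Rabs_triang|]. lra.
Qed.

End IncrementEstimate.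

Lemma partials_near {n} (D : Fin.t n -> vec n -> R) x0 eps :
  (forall i, cont_vec (D i)) -> eps > 0 ->
  exists r, r > 0 /\ forall xi i, box x0 r xi -> Rabs (D i xi - D i x0) <= eps.
Proof.
  intros HD Heps.
  destruct (fin_common_radius n
              (fun i r => forall xi, box x0 r xi -> Rabs (D i xi - D i x0) <= eps))
    as [r [Hr H]].
  - intros i d d' Hd Hq xi Hb. apply Hq. intros k; specialize (Hb k); lra.
  - intros i. destruct (HD i x0 eps Heps) as [d [Hd H]]. exists d; split; [exact Hd|].
    intros xi Hb; left; apply H, Hb.
  - exists r; split; [exact Hr|]. intros; apply H; assumption.
Qed.

Lemma C1_local_lipschitz {n} (f : vec n -> R) D x0 :
  C1_partials f D ->
  exists r L, r > 0 /\ 0 <= L /\ forall y y' rho, box x0 r y -> box x0 r y' ->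
    (forall i, Rabs (y' i - y i) <= rho) -> Rabs (f y' - f y) <= L * rho.
Proof.
  intros [HD HDc].
  destruct (partials_near D x0 1 HDc) as [r [Hr Hnear]]; [lra|].
  set (B := fsum n (fun i => Rabs (D i x0)) + 1).
  assert (HB0 : 0 <= B)
    by (pose proof (fsum_ge0 n _ (fun i => Rabs_pos (D i x0))); unfold B; lra).
  exists r, (INR n * B); repeat split; [exact Hr | apply Rmult_le_pos, HB0; apply pos_INR|].
  intros y y' rho Hy Hy' Hrho.
  assert (HL : forall xi i, box x0 r xi -> Rabs (D i xi - 0) <= B).
  { intros xi i Hb. specialize (Hnear xi i Hb). rewrite Rminus_0_r.
    pose proof (fsum_ge_term n (fun i => Rabs (D i x0)) i (fun i => Rabs_pos _)).
    pose proof (Rabs_triang_inv (D i xi) (D i x0)). unfold B; lra. }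
  pose proof (mix_increment_estimate n f D HD x0 r (fun _ => 0) B y y' rho HL Hy Hy' Hrho
                (fin_enum n) (NoDup_fin_enum n)) as P.
  rewrite mix_fin_enum, length_fin_enum in P.
  replace (fun i => 0 * (y' i - y i)) with (fun _ : Fin.t n => 0) in P
    by (apply functional_extensionality; intros; ring).
  rewrite lsum_zero, Rminus_0_r in P. exact P.
Qed.

Lemma C1_first_order {n} (f : vec n -> R) D x0 eps :
  C1_partials f D -> eps > 0 ->
  exists r, r > 0 /\ forall y rho, box x0 r y -> (forall i, Rabs (y i - x0 i) <= rho) ->
    Rabs (f y - f x0 - fsum n (fun i => D i x0 * (y i - x0 i))) <= INR n * eps * rho.
Proof.
  intros [HD HDc] Heps.
  destruct (partials_near D x0 eps HDc Heps) as [r [Hr H]].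
  exists r; split; [exact Hr|]. intros y rho Hy Hrho.
  assert (Hx0 : box x0 r x0) by (intros i; rewrite Rminus_diag, Rabs_R0; exact Hr).
  pose proof (mix_increment_estimate n f D HD x0 r (fun i => D i x0) eps x0 y rho H Hx0 Hy
                Hrho (fin_enum n) (NoDup_fin_enum n)) as P.
  rewrite mix_fin_enum, length_fin_enum, lsum_fin_enum in P. exact P.
Qed.

Lemma difference_quotients_close {n} (z : R -> vec n) (v : vec n) t0 e :
  (forall j, derivable_pt_lim (fun u => z u j) t0 (v j)) -> e > 0 ->
  exists d, d > 0 /\ forall k, k <> 0 -> Rabs k < d ->
    forall i, Rabs ((z (t0 + k) i - z t0 i) / k - v i) < e.
Proof.
  intros Hz He.
  destruct (fin_common_radius n (fun i d => forall k, k <> 0 -> Rabs k < d ->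
              Rabs ((z (t0 + k) i - z t0 i) / k - v i) < e)) as [d [Hd Hq]].
  - intros i d d' Hdd Hq k Hk Hk'. apply Hq; [exact Hk | lra].
  - intros i. destruct (Hz i e He) as [d Hd]. exists d; split; [apply cond_pos | exact Hd].
  - exists d; split; [exact Hd|]. intros; apply Hq; assumption.
Qed.

Lemma difference_quotient_split n (f : vec n -> R) (y x0 : vec n) D (v : vec n) k :
  k <> 0 ->
  (f y - f x0) / k - fsum n (fun i => D i x0 * v i)
  = (f y - f x0 - fsum n (fun i => D i x0 * (y i - x0 i))) / k
    + fsum n (fun i => D i x0 * ((y i - x0 i) / k - v i)).
Proof.
  intros Hk.
  rewrite (fsum_ext n (fun i => D i x0 * ((y i - x0 i) / k - v i))
             (fun i => / k * (D i x0 * (y i - x0 i)) + (-1) * (D i x0 * v i)))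
    by (intros; field; exact Hk).
  rewrite fsum_plus, !fsum_scal. field; exact Hk.
Qed.

Lemma Rabs_le_of_quotient_close q k c :
  k <> 0 -> Rabs (q / k - c) <= 1 -> Rabs q <= Rabs k * (Rabs c + 1).
Proof.
  intros Hk Hq. replace q with (k * (q / k)) by (field; exact Hk).
  rewrite Rabs_mult. apply Rmult_le_compat_l; [apply Rabs_pos|].
  pose proof (Rabs_triang_inv (q / k) c). lra.
Qed.

Lemma derivable_pt_lim_C1_comp {n} (f : vec n -> R) D (z : R -> vec n) (v : vec n) t0 :
  C1_partials f D -> (forall j, derivable_pt_lim (fun u => z u j) t0 (v j)) ->
  derivable_pt_lim (fun u => f (z u)) t0 (fsum n (fun i => D i (z t0) * v i)).
Proof.
  intros HC Hz eps Heps. set (x0 := z t0).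
  set (K := INR n + 1).
  set (V := fsum n (fun i => Rabs (v i)) + 1).
  set (SD := fsum n (fun i => Rabs (D i x0)) + 1).
  assert (HK : K > 0) by (unfold K; pose proof (pos_INR n); lra).
  assert (HvV : forall i, Rabs (v i) + 1 <= V).
  { intros i. pose proof (fsum_ge_term n _ i (fun i => Rabs_pos (v i))). unfold V; lra. }
  assert (HV : V > 0) by (pose proof (fsum_ge0 n _ (fun i => Rabs_pos (v i))); unfold V; lra).
  assert (HSD0 : 0 <= fsum n (fun i => Rabs (D i x0)))
    by (apply fsum_ge0; intros; apply Rabs_pos).
  set (e1 := eps / (2 * K * V)).
  assert (He1 : e1 > 0) by (unfold e1; apply Rdiv_lt_0_compat; [|apply Rmult_lt_0_compat]; lra).
  destruct (C1_first_order f D x0 e1 HC He1) as [r [Hr Hfirst]].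
  set (e2 := Rmin 1 (eps / (2 * SD))).
  assert (He2 : e2 > 0)
    by (apply Rmin_glb_lt; [lra | apply Rdiv_lt_0_compat; unfold SD; lra]).
  destruct (difference_quotients_close z v t0 e2 Hz He2) as [d [Hd Hq]].
  assert (Hdel : 0 < Rmin d (r / V)) by (apply Rmin_glb_lt; [|apply Rdiv_lt_0_compat]; lra).
  exists (mkposreal _ Hdel). intros k Hk Hk'. simpl in Hk'.
  assert (Hkd : Rabs k < d) by (eapply Rlt_le_trans; [exact Hk' | apply Rmin_l]).
  assert (HkV : Rabs k * V < r).
  { assert (Rabs k < r / V) by (eapply Rlt_le_trans; [exact Hk' | apply Rmin_r]).
    apply (Rmult_lt_compat_r V) in H; [|exact HV].
    unfold Rdiv in H; rewrite Rmult_assoc, Rinv_l in H; lra. }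
  assert (Hak : Rabs k > 0) by (apply Rabs_pos_lt, Hk).
  set (y := z (t0 + k)). specialize (Hq k Hk Hkd). fold y x0 in Hq.
  assert (Hincr : forall i, Rabs (y i - x0 i) <= Rabs k * V).
  { intros i. eapply Rle_trans.
    - apply (Rabs_le_of_quotient_close _ k (v i) Hk).
      assert (e2 <= 1) by apply Rmin_l. pose proof (Hq i). lra.
    - apply Rmult_le_compat_l; [apply Rabs_pos | apply HvV]. }
  assert (Hbox : box x0 r y) by (intros i; specialize (Hincr i); lra).
  specialize (Hfirst y (Rabs k * V) Hbox Hincr).
  rewrite (difference_quotient_split n f y x0 D v k Hk).
  eapply Rle_lt_trans; [apply Rabs_triang|].
  assert (Hrem : Rabs ((f y - f x0 - fsum n (fun i => D i x0 * (y i - x0 i))) / k)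
                 <= eps / 2 * (INR n / K)).
  { unfold Rdiv at 1. rewrite Rabs_mult, Rabs_inv.
    apply (Rmult_le_reg_r (Rabs k)); [exact Hak|].
    rewrite Rmult_assoc, Rinv_l, Rmult_1_r by lra.
    eapply Rle_trans; [exact Hfirst|]. unfold e1. right. field. split; lra. }
  assert (Hrem' : eps / 2 * (INR n / K) < eps / 2).
  { assert (INR n / K < 1).
    { apply (Rmult_lt_reg_r K); [exact HK|]. unfold Rdiv; rewrite Rmult_assoc, Rinv_l by lra.
      unfold K; lra. }
    assert (0 <= INR n / K) by (apply Rdiv_le_0_compat; [apply pos_INR | exact HK]).
    nra. }
  assert (Hlin : Rabs (fsum n (fun i => D i x0 * ((y i - x0 i) / k - v i))) < eps / 2).
  { eapply Rle_lt_trans; [apply fsum_abs|].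
    eapply Rle_lt_trans.
    { apply (fsum_le n _ (fun i => e2 * Rabs (D i x0))). intros i. rewrite Rabs_mult, Rmult_comm.
      apply Rmult_le_compat_r; [apply Rabs_pos | left; apply Hq]. }
    rewrite fsum_scal.
    assert (e2 * SD <= eps / 2).
    { assert (e2 <= eps / (2 * SD)) by apply Rmin_r.
      apply (Rmult_le_compat_r SD) in H; [|unfold SD; lra].
      replace (eps / (2 * SD) * SD) with (eps / 2) in H by (field; unfold SD; lra). exact H. }
    unfold SD in H. nra. }
  lra.
Qed.

(** * Uniqueness for [z' = a(t) F(z)] *)

Lemma C1_field_local_lipschitz {n} (F : vec n -> vec n) x0 :
  (forall j, C1_vec (fun x => F x j)) ->
  exists r L, r > 0 /\ 0 <= L /\ forall j y y' rho, 0 <= rho -> box x0 r y -> box x0 r y' ->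
    (forall i, Rabs (y' i - y i) <= rho) -> Rabs (F y' j - F y j) <= L * rho.
Proof.
  intros HF.
  set (Lip := fun j r L => 0 <= L /\ forall y y' rho, 0 <= rho -> box x0 r y -> box x0 r y' ->
                (forall i, Rabs (y' i - y i) <= rho) -> Rabs (F y' j - F y j) <= L * rho).
  destruct (fin_common_radius n (fun j r => exists L, Lip j r L)) as [r [Hr Hrad]].
  - intros j d d' Hd [L [HL HQ]]. exists L; split; [exact HL|].
    intros y y' rho Hrho Hy Hy' Hi.
    apply HQ; auto; intros k; [specialize (Hy k) | specialize (Hy' k)]; lra.
  - intros j. destruct (HF j) as [D HD].
    destruct (C1_local_lipschitz (fun x => F x j) D x0 HD) as [r [L [Hr [HL H]]]].
    exists r; split; [exact Hr|]. exists L; split; [exact HL|]. intros; apply H; assumption.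
  - destruct (fin_common_bound n (fun j L => Lip j r L)) as [L HL].
    + intros j L L' HLL [HL0 HQ]. split; [lra|]. intros y y' rho Hrho Hy Hy' Hi.
      pose proof (HQ y y' rho Hrho Hy Hy' Hi). pose proof (Rmult_le_compat_r _ _ _ Hrho HLL).
      lra.
    + exact Hrad.
    + exists r, (Rmax 0 L). split; [exact Hr|]. split; [apply Rmax_l|].
      intros j y y' rho Hrho Hy Hy' Hi. destruct (HL j) as [HL0 HQ].
      rewrite Rmax_right by exact HL0. apply HQ; assumption.
Qed.

Lemma continuity_pt_box {n} (w : R -> vec n) t0 r :
  r > 0 -> (forall i, continuity_pt (fun t => w t i) t0) ->
  exists d, d > 0 /\ forall t, Rabs (t - t0) < d -> box (w t0) r (w t).
Proof.
  intros Hr Hc.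
  destruct (fin_common_radius n (fun i d => forall t, Rabs (t - t0) < d ->
              Rabs (w t i - w t0 i) < r)) as [d [Hd H]].
  - intros i d d' Hdd Hq t Ht. apply Hq; lra.
  - intros i. destruct (Hc i r Hr) as [d [Hd H]]. exists d; split; [exact Hd|].
    intros t Ht. destruct (Req_dec t t0) as [->|Hne].
    + rewrite Rminus_diag, Rabs_R0; exact Hr.
    + apply (H t). split; [split; [exact I | auto] | exact Ht].
  - exists d; split; [exact Hd|]. intros t Ht i. apply H, Ht.
Qed.

Lemma eq0_of_halving_bounds x r : r > 0 -> (forall k, Rabs x <= r * (1/2) ^ k) -> x = 0.
Proof.
  intros Hr H. destruct (Req_dec x 0) as [|Hx]; [assumption|]. exfalso.
  assert (Hax : Rabs x > 0) by (apply Rabs_pos_lt, Hx).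
  destruct (pow_lt_1_zero (1/2)) with (y := Rabs x / r) as [N HN].
  - rewrite Rabs_right; lra.
  - apply Rdiv_lt_0_compat; lra.
  - specialize (HN N (le_n N)). specialize (H N).
    rewrite Rabs_right in HN by (apply Rle_ge, pow_le; lra).
    apply (Rmult_lt_compat_l r) in HN; [|lra].
    replace (r * (Rabs x / r)) with (Rabs x) in HN by (field; lra). lra.
Qed.

Lemma continuity_pt_eq0_left f S :
  continuity_pt f S -> 0 < S -> (forall s, 0 <= s < S -> f s = 0) -> f S = 0.
Proof.
  intros Hc HS H0. destruct (Req_dec (f S) 0) as [|Hne]; [assumption|]. exfalso.
  destruct (Hc (Rabs (f S))) as [al [Hal Hnear]]; [apply Rabs_pos_lt, Hne|].
  set (s := S - Rmin al S / 2).
  assert (Hm : 0 < Rmin al S <= al /\ Rmin al S <= S)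
    by (unfold Rmin; destruct Rle_dec; lra).
  specialize (Hnear s). simpl in Hnear. unfold R_dist in Hnear.
  rewrite H0, Rminus_0_l, Rabs_Ropp in Hnear by (unfold s; lra).
  enough (Rabs (f S) < Rabs (f S)) by lra.
  apply Hnear. split; [split; [exact I | unfold s; lra]|].
  rewrite Rabs_left by (unfold s; lra). unfold s; lra.
Qed.

Lemma continuity_pt_bound_near f t0 :
  continuity_pt f t0 ->
  exists d, d > 0 /\ forall t, Rabs (t - t0) < d -> Rabs (f t) <= Rabs (f t0) + 1.
Proof.
  intros Hc. destruct (Hc 1) as [d [Hd Hnear]]; [lra|].
  exists d; split; [exact Hd|]. intros t Ht.
  destruct (Req_dec t t0) as [->|Hne]; [lra|].
  assert (Rabs (f t - f t0) < 1) by (apply Hnear; split; [split; [exact I | auto] | exact Ht]).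
  pose proof (Rabs_triang_inv (f t) (f t0)). lra.
Qed.

Lemma short_step_exists c delta :
  0 <= c -> 0 < delta -> exists d, 0 < d < delta /\ c * d <= 1 / 2.
Proof.
  intros Hc Hdelta. exists (Rmin (delta / 2) (1 / (2 * (c + 1)))).
  assert (Hm : 0 < 1 / (2 * (c + 1))) by (apply Rdiv_lt_0_compat; lra).
  split; [unfold Rmin; destruct Rle_dec; lra|].
  apply Rle_trans with (c * (1 / (2 * (c + 1)))).
  - apply Rmult_le_compat_l; [exact Hc | apply Rmin_r].
  - apply (Rmult_le_reg_r (2 * (c + 1))); [lra|]. field_simplify; lra.
Qed.

Section OdeUniqueness.

Variables (n : nat) (F : vec n -> vec n) (a : R -> R) (T : R) (w v : R -> vec n).
Hypothesis HF : forall j, C1_vec (fun x => F x j).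
Hypothesis Ha : forall t, continuity_pt a t.
Hypothesis Hwc : forall i t, continuity_pt (fun t => w t i) t.
Hypothesis Hvc : forall i t, continuity_pt (fun t => v t i) t.
Hypothesis Hw : forall t, 0 < t < T -> forall j,
  derivable_pt_lim (fun u => w u j) t (a t * F (w t) j).
Hypothesis Hv : forall t, 0 < t < T -> forall j,
  derivable_pt_lim (fun u => v u j) t (a t * F (v t) j).

(* By the mean value theorem the gap grows at rate at most [K L rho], hence by at
   most [rho / 2] over a step of length [d]. *)
Lemma solution_gap_halves S d x0 r L K :
  0 <= S -> S + d <= T -> 0 <= L -> K * L * d <= 1 / 2 ->
  (forall j y y' rho, 0 <= rho -> box x0 r y -> box x0 r y' ->
     (forall i, Rabs (y' i - y i) <= rho) -> Rabs (F y' j - F y j) <= L * rho) ->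
  (forall t, S <= t <= S + d -> Rabs (a t) <= K /\ box x0 r (w t) /\ box x0 r (v t)) ->
  w S = v S ->
  forall rho, 0 <= rho -> (forall t i, S <= t <= S + d -> Rabs (w t i - v t i) <= rho) ->
  forall t i, S <= t <= S + d -> Rabs (w t i - v t i) <= rho / 2.
Proof.
  intros HS HST HL HKLd Hlip Hnear HSeq rho Hrho Hgap t i Ht.
  destruct (Req_dec t S) as [->|Hne].
  { rewrite HSeq, Rminus_diag, Rabs_R0. lra. }
  destruct (MVT_gen (fun u => w u i - v u i) S t
              (fun u => a u * F (w u) i - a u * F (v u) i)) as [c [Hc Hmvt]].
  - intros x Hx. rewrite Rmin_left, Rmax_right in Hx by lra.
    apply is_derive_Reals, derivable_pt_lim_minus; [apply Hw | apply Hv]; lra.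
  - intros x _. apply continuity_pt_minus; auto.
  - simpl in Hmvt. rewrite Rmin_left, Rmax_right in Hc by lra.
    rewrite HSeq, Rminus_diag, Rminus_0_r in Hmvt. rewrite Hmvt.
    destruct (Hnear c ltac:(lra)) as [Hac [Hwb Hvb]].
    assert (HF' : Rabs (F (w c) i - F (v c) i) <= L * rho).
    { apply Hlip; auto. intros k. apply Hgap; lra. }
    replace (a c * F (w c) i - a c * F (v c) i) with (a c * (F (w c) i - F (v c) i)) by ring.
    rewrite !Rabs_mult, (Rabs_right (t - S)) by lra.
    pose proof (Rabs_pos (a c)). pose proof (Rabs_pos (F (w c) i - F (v c) i)).
    assert (Rabs (a c) * Rabs (F (w c) i - F (v c) i) <= K * (L * rho))
      by (apply Rmult_le_compat; assumption).
    assert (0 <= K * (L * rho)) by (apply Rmult_le_pos; [lra | apply Rmult_le_pos; lra]).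
    assert (Rabs (a c) * Rabs (F (w c) i - F (v c) i) * (t - S) <= K * (L * rho) * d)
      by (apply Rmult_le_compat; [apply Rmult_le_pos; assumption | lra | assumption | lra]).
    nra.
Qed.

Lemma ode_solutions_agree_right S :
  0 <= S < T -> w S = v S ->
  exists d, d > 0 /\ S + d <= T /\ forall t, S <= t <= S + d -> w t = v t.
Proof.
  intros HS HSeq. set (x0 := w S).
  destruct (C1_field_local_lipschitz F x0 HF) as [r [L [Hr [HL Hlip]]]].
  set (K := Rabs (a S) + 1).
  assert (HK : 0 <= K) by (pose proof (Rabs_pos (a S)); unfold K; lra).
  destruct (continuity_pt_bound_near a S (Ha S)) as [da [Hda Hnear_a]].
  destruct (continuity_pt_box w S r Hr (fun i => Hwc i S)) as [dw [Hdw Hnear_w]].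
  destruct (continuity_pt_box v S r Hr (fun i => Hvc i S)) as [dv [Hdv Hnear_v]].
  rewrite <- HSeq in Hnear_v. fold x0 in Hnear_w, Hnear_v.
  set (delta := Rmin (Rmin da dw) (Rmin dv (T - S))).
  assert (Hdelta : 0 < delta /\ delta <= da /\ delta <= dw /\ delta <= dv /\ delta <= T - S)
    by (unfold delta, Rmin; repeat destruct Rle_dec; lra).
  destruct (short_step_exists (K * L) delta) as [d [Hd HKLd]];
    [apply Rmult_le_pos; assumption | apply Hdelta|].
  assert (Hnear : forall t, S <= t <= S + d ->
                    Rabs (a t) <= K /\ box x0 r (w t) /\ box x0 r (v t)).
  { intros t Ht. assert (Hts : Rabs (t - S) < delta) by (rewrite Rabs_right; lra).
    repeat split; [apply Hnear_a | apply Hnear_w | apply Hnear_v]; lra. }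
  assert (Hgap : forall k t i, S <= t <= S + d -> Rabs (w t i - v t i) <= 2 * r * (1/2) ^ k).
  { induction k as [|k IH]; intros t i Ht.
    - destruct (Hnear t Ht) as [_ [Hwb Hvb]]. specialize (Hwb i). specialize (Hvb i).
      replace (w t i - v t i) with ((w t i - x0 i) - (v t i - x0 i)) by ring.
      eapply Rle_trans; [apply Rabs_triang|]. rewrite Rabs_Ropp. simpl; lra.
    - replace (2 * r * (1/2) ^ Datatypes.S k) with (2 * r * (1/2) ^ k / 2) by (simpl; field).
      apply (solution_gap_halves S d x0 r L K); try lra; auto.
      pose proof (pow_le (1/2) k). apply Rmult_le_pos; lra. }
  exists d; repeat split; [lra | lra|].
  intros t Ht. apply functional_extensionality; intros i.
  apply Rminus_diag_uniq, (eq0_of_halving_bounds _ (2 * r)); [lra|].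
  intros k; apply Hgap, Ht.
Qed.

Lemma ode_solutions_agree : T > 0 -> w 0 = v 0 -> forall t, 0 <= t <= T -> w t = v t.
Proof.
  intros HT H0.
  set (E := fun t => 0 <= t <= T /\ forall s, 0 <= s <= t -> w s = v s).
  assert (HE0 : E 0) by (split; [lra|]; intros s Hs; replace s with 0 by lra; exact H0).
  destruct (completeness E) as [S [HSub HSl]].
  - exists T. intros t [Ht _]; lra.
  - exists 0; exact HE0.
  assert (HS0 : 0 <= S) by (apply HSub, HE0).
  assert (HST : S <= T) by (apply HSl; intros t [Ht _]; lra).
  assert (Hbefore : forall s, 0 <= s < S -> w s = v s).
  { intros s Hs.
    destruct (Classical_Prop.classic (exists t, E t /\ s <= t)) as [[t [[_ Ht] Hst]]|Hno].
    - apply Ht; lra.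
    - exfalso. assert (S <= s); [|lra]. apply HSl. intros t Et.
      destruct (Rle_dec t s); [assumption|]. exfalso; apply Hno; exists t; split; auto; lra. }
  assert (HatS : w S = v S).
  { destruct (Req_dec S 0) as [->|HSn]; [exact H0|].
    apply functional_extensionality; intros i. apply Rminus_diag_uniq.
    apply (continuity_pt_eq0_left (fun t => w t i - v t i)); [|lra|].
    - apply continuity_pt_minus; auto.
    - intros s Hs. rewrite (Hbefore s Hs); ring. }
  assert (HSeqT : S = T).
  { destruct (Req_dec S T) as [|Hne]; [assumption|]. exfalso.
    destruct (ode_solutions_agree_right S ltac:(lra) HatS) as [d [Hd [HdT Hright]]].
    assert (E (S + d)).
    { split; [lra|]. intros s Hs.
      destruct (Rlt_dec s S); [apply Hbefore | apply Hright]; lra. }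
    specialize (HSub _ H). lra. }
  intros t Ht. destruct (Req_dec t S) as [->|]; [exact HatS|]. apply Hbefore; lra.
Qed.

End OdeUniqueness.

(** * Reparametrisation of the autonomous flow *)

Lemma derivable_pt_lim_reparam {n} (F : vec n -> vec n) (zhat : R -> vec n) M a :
  (forall tau j, derivable_pt_lim (fun u => zhat u j) tau (F (zhat tau) j)) ->
  (forall t, derivable_pt_lim M t (a t)) ->
  forall t j, derivable_pt_lim (fun u => zhat (M u) j) t (a t * F (zhat (M t)) j).
Proof.
  intros Hz HM t j. rewrite Rmult_comm.
  exact (derivable_pt_lim_comp M (fun tau => zhat tau j) t _ _ (HM t) (Hz (M t) j)).
Qed.

Lemma ode_time_change {n} (F : vec n -> vec n) (zhat w : R -> vec n) (nu : R -> R) T :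
  (forall j, C1_vec (fun x => F x j)) ->
  (forall tau j, derivable_pt_lim (fun u => zhat u j) tau (F (zhat tau) j)) ->
  T > 0 -> cont_on 0 T nu ->
  (forall j, cont_on 0 T (fun t => w t j)) -> w 0 = zhat 0 ->
  (forall t, 0 < t < T -> forall j,
     derivable_pt_lim (fun u => w u j) t (nu t * F (w t) j)) ->
  w T = zhat (Ifun T nu).
Proof.
  intros HF Hz HT Hnu Hwc Hw0 Hw.
  set (a := fun t => nu (clamp 0 T t)).
  assert (Ha : forall t, continuous a t) by (intros; apply continuous_clamp; auto; lra).
  set (M := fun t => RInt a 0 t).
  assert (HM : forall t, derivable_pt_lim M t (a t)).
  { intros t. apply is_derive_Reals, (is_derive_RInt (V := R_NormedModule) a M 0 t).
    - exists (mkposreal 1 Rlt_0_1). intros y _.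
      apply (RInt_correct (V := R_CompleteNormedModule)),
            (ex_RInt_continuous (V := R_CompleteNormedModule)).
      intros; apply Ha.
    - apply Ha. }
  assert (Hagree : forall t, 0 <= t <= T -> w (clamp 0 T t) = zhat (M t)).
  { apply (ode_solutions_agree n F a T (fun t => w (clamp 0 T t)) (fun t => zhat (M t)) HF).
    - intros t; apply continuity_pt_clamp; auto; lra.
    - intros i t; apply (continuity_pt_clamp 0 T (fun t => w t i)); auto; lra.
    - intros i t. apply derivable_continuous_pt.
      eexists; apply (derivable_pt_lim_reparam F zhat M a Hz HM).
    - intros t Ht j. unfold a. rewrite !clamp_id by lra.
      apply (derivable_pt_lim_clamp T (fun u => w u j)); auto.
    - intros t _ j; apply (derivable_pt_lim_reparam F zhat M a Hz HM).
    - exact HT.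
    - unfold M. rewrite clamp_id, RInt_point by lra. exact Hw0. }
  specialize (Hagree T ltac:(lra)). rewrite clamp_id in Hagree by lra.
  rewrite Hagree. unfold M, a, Ifun.
  rewrite RInt_Riemann by (apply ex_RInt_cont_on; auto; lra).
  rewrite (RInt_ext_clamp 0 T ltac:(lra) nu). reflexivity.
Qed.

(** * Transfer of the Lagrange conditions *)

Lemma derivable_pt_lim_lagrangian_swap f u v du dv al be :
  derivable_pt_lim (fun e => f e + al * u e) 0 0 ->
  derivable_pt_lim u 0 du -> derivable_pt_lim v 0 dv -> al * du = be * dv ->
  derivable_pt_lim (fun e => f e + be * v e) 0 0.
Proof.
  intros Hf Hu Hv Hd.
  assert (H := derivable_pt_lim_plus _ _ 0 0 _ Hf
                 (derivable_pt_lim_minus _ _ 0 _ _ (derivable_pt_lim_scal v be 0 dv Hv)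
                                                  (derivable_pt_lim_scal u al 0 du Hu))).
  replace (0 + (be * dv - al * du)) with 0 in H by lra.
  unfold plus_fct, minus_fct, mult_real_fct in H.
  replace (fun e => f e + be * v e)
    with (fun e => f e + al * u e + (be * v e - al * u e)); [exact H|].
  apply functional_extensionality; intros e. ring.
Qed.

Section LagrangeTransfer.

Variables (n s : nat) (p : vec s) (z0 : vec n) (h : vec n -> vec s -> vec n)
  (zhat : R -> vec n) (T : R) (zsol : (R -> R) -> R -> vec n) (Phi : vec n -> R)
  (g : R -> R) (mu : R -> R).
Hypothesis Hh : forall j, C1_vec (fun x => h x p j).
Hypothesis Hzhat : is_global_sol h p z0 zhat.
Hypothesis HT : T > 0.
Hypothesis Hzsol : forall nu, cont_on 0 T nu -> is_sol h p z0 T nu (zsol nu).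
Hypothesis HPhi : C1_vec Phi.
Hypothesis Hmu : cont_on 0 T mu.

Lemma terminal_state_time_change nu : cont_on 0 T nu -> zsol nu T = zhat (Ifun T nu).
Proof.
  intros Hnu. destruct (Hzsol nu Hnu) as [Hwc [Hw0 Hw]]. destruct Hzhat as [Hz0 Hz].
  apply (ode_time_change (fun x => h x p)); auto. congruence.
Qed.

Lemma derivable_pt_lim_Phi_zhat :
  derivable_pt_lim (fun tau => Phi (zhat tau)) (Ifun T mu) (Phih Phi h p zsol T mu).
Proof.
  destruct HPhi as [D HD].
  unfold Phih, dot, grad. rewrite (terminal_state_time_change mu Hmu).
  rewrite (fsum_ext n _ (fun i => D i (zhat (Ifun T mu)) * h (zhat (Ifun T mu)) p i))
    by (intros i; rewrite (partial_C1 Phi D i _ HD); reflexivity).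
  apply derivable_pt_lim_C1_comp; [exact HD|]. apply Hzhat.
Qed.

Lemma derivable_pt_lim_Ifun_dir dmu :
  cont_on 0 T dmu ->
  derivable_pt_lim (fun e => Ifun T (fun t => mu t + e * dmu t)) 0 (Ifun T dmu).
Proof.
  intros Hd.
  replace (fun e => Ifun T (fun t => mu t + e * dmu t))
    with (fun e => Ifun T mu + e * Ifun T dmu)
    by (apply functional_extensionality; intros e;
        symmetry; apply Ifun_plus_scal; auto; lra).
  apply is_derive_Reals. auto_derive; [exact I | ring].
Qed.

(* Perturbing [mu] only moves the terminal state along the orbit of [zhat],
   by the perturbation of the integral. *)
Lemma derivable_pt_lim_Phi_terminal_dir dmu :
  cont_on 0 T dmu ->
  derivable_pt_lim (fun e => Phi (zsol (fun t => mu t + e * dmu t) T)) 0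
    (Phih Phi h p zsol T mu * Ifun T dmu).
Proof.
  intros Hd.
  replace (fun e => Phi (zsol (fun t => mu t + e * dmu t) T))
    with (fun e => Phi (zhat (Ifun T (fun t => mu t + e * dmu t)))).
  2:{ apply functional_extensionality; intros e.
      rewrite terminal_state_time_change by (apply cont_on_plus_scal; assumption).
      reflexivity. }
  apply (derivable_pt_lim_comp (fun e => Ifun T (fun t => mu t + e * dmu t))
           (fun tau => Phi (zhat tau))).
  - apply derivable_pt_lim_Ifun_dir, Hd.
  - replace (Ifun T (fun t => mu t + 0 * dmu t)) with (Ifun T mu)
      by (f_equal; apply functional_extensionality; intros; ring).
    apply derivable_pt_lim_Phi_zhat.
Qed.

Lemma stationary_a_b lam :
  stationary_a g Phi zsol T mu lam -> stationary_b g T mu (lam * Phih Phi h p zsol T mu).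
Proof.
  intros Hst dmu Hd.
  apply (derivable_pt_lim_lagrangian_swap _ _ _ _ _ _ _ (Hst dmu Hd)
           (derivable_pt_lim_Phi_terminal_dir dmu Hd) (derivable_pt_lim_Ifun_dir dmu Hd)).
  ring.
Qed.

Lemma stationary_b_a lamref :
  Phih Phi h p zsol T mu <> 0 -> stationary_b g T mu lamref ->
  stationary_a g Phi zsol T mu (lamref / Phih Phi h p zsol T mu).
Proof.
  intros HPh Hst dmu Hd.
  apply (derivable_pt_lim_lagrangian_swap _ _ _ _ _ _ _ (Hst dmu Hd)
           (derivable_pt_lim_Ifun_dir dmu Hd) (derivable_pt_lim_Phi_terminal_dir dmu Hd)).
  field; exact HPh.
Qed.

End LagrangeTransfer.


Theorem theorem2
  (n s : nat) (p : vec s) (z0 : vec n)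
  (h : vec n -> vec s -> vec n)
  (Hh : forall q : vec s, forall j : Fin.t n, C1_vec (fun x => h x q j))
  (zhat : R -> vec n)
  (Hzhat : is_global_sol h p z0 zhat)
  (Hzhat_uniq : forall w : R -> vec n, is_global_sol h p z0 w -> forall tau, w tau = zhat tau)
  (T : R) (HT : T > 0)
  (zsol : (R -> R) -> R -> vec n)
  (Hzsol : forall mu : R -> R, cont_on 0 T mu -> is_sol h p z0 T mu (zsol mu))
  (Phi : vec n -> R) (HPhi : C1_vec Phi)
  (g : R -> R) (Hg : C1_real g) (Hgpos : forall x, 0 < g x)
  (Phibar : R)
  (mu : R -> R) (Hmu : cont_on 0 T mu) (Hmupos : forall t, 0 <= t <= T -> 0 < mu t)
  (HPhih : Phih Phi h p zsol T mu <> 0) :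
  (forall lam : R,
     Phi (zsol mu T) = Phibar -> stationary_a g Phi zsol T mu lam ->
     Ifun T mu > 0 /\
     Phi (zhat (Ifun T mu)) = Phibar /\
     stationary_b g T mu (lam * Phih Phi h p zsol T mu))
  /\
  (forall C2 lamref : R,
     C2 > 0 -> Phi (zhat C2) = Phibar ->
     Ifun T mu = C2 -> stationary_b g T mu lamref ->
     Phi (zsol mu T) = Phibar /\
     stationary_a g Phi zsol T mu (lamref / Phih Phi h p zsol T mu)).
Proof.
  pose proof (Hh p) as Hhp.
  assert (Hterminal : zsol mu T = zhat (Ifun T mu))
    by (eapply terminal_state_time_change; eassumption).
  split.
  - intros lam HPhb Hst. repeat split.
    + apply Ifun_gt0; assumption.
    + rewrite <- Hterminal; exact HPhb.
    + eapply stationary_a_b; eassumption.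
  - intros C2 lamref _ HPhb HI Hst. split.
    + rewrite Hterminal, HI; exact HPhb.
    + eapply stationary_b_a; eassumption.
Qed.
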